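(* For all $k,\ell\in\mathbb N$ the following hold in the $q$-shuffle algebra $\mathbb V$: $$[W_{-k},W_{-\ell}]=0,\qquad [W_{k+1},W_{\ell+1}]=0,$$ $$[W_{-k},W_{\ell+1}]+[W_{k+1},W_{-\ell}]=0,$$ $$[W_{-k},G_{\ell+1}]+[G_{k+1},W_{-\ell}]=0,$$ $$[W_{-k},\tilde G_{\ell+1}]+[\tilde G_{k+1},W_{-\ell}]=0,$$ $$[W_{k+1},G_{\ell+1}]+[G_{k+1},W_{\ell+1}]=0,$$ $$[W_{k+1},\tilde G_{\ell+1}]+[\tilde G_{k+1},W_{\ell+1}]=0,$$ $$[G_{k+1},G_{\ell+1}]=0,\qquad [\tilde G_{k+1},\tilde G_{\ell+1}]=0,$$ $$[\tilde G_{k+1},G_{\ell+1}]+[G_{k+1},\tilde G_{\ell+1}]=0.$$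
   Context: Let $\mathbb F$ be a field and let $q\in\mathbb F$ be nonzero and not a root of unity. Let $\mathbb V$ be the free associative $\mathbb F$-algebra on noncommuting $x,y$, with basis the words (including $1$). Juxtaposition denotes concatenation. Set $\langle x,x\rangle=\langle y,y\rangle=2$ and $\langle x,y\rangle=\langle y,x\rangle=-2$. The $q$-shuffle product $\star$ is the bilinear product determined as follows: - $1\star v=v\star 1=v$; - for nontrivial words $u=u_1\cdots u_r$ and $v=v_1\cdots v_s$, $$u\star v=u_1((u_2\cdots u_r)\star v)+v_1(u\star(v_2\cdots v_s))q^{\langle u_1,v_1\rangle+\cdots+\langle u_r,v_1\rangle}.$$ This makes $\mathbb V$ an associative algebra, the $q$-shuffle algebra. Write $[a,b]=a\star b-b\star a$. For $k\in\mathbb N$: - $W_{-k}=xyx\cdots x$ is the alternating word of length $2k+1$ beginning and ending with $x$; - $W_{k+1}=yxy\cdots y$ is the alternating word of length $2k+1$ beginning and ending with $y$; - $G_k=yxyx\cdots yx$ is the word of length $2k$; - $\tilde G_k=xyxy\cdots xy$ is the word of length $2k$; - $G_0=\tilde G_0=1$. *)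

From HB Require Import structures.
From mathcomp Require Import all_boot all_order all_algebra.
Set Implicit Arguments. Unset Strict Implicit. Unset Printing Implicit Defensive.
Import Order.TTheory GRing.Theory Num.Theory.
Local Open Scope ring_scope.

Inductive letter := lx | ly.
Definition letter_eqb (a b : letter) : bool :=
  match a, b with lx, lx | ly, ly => true | _, _ => false end.
Lemma letter_eqP : Equality.axiom letter_eqb.
Proof. by case; case; constructor. Qed.
HB.instance Definition _ := hasDecEq.Build letter letter_eqP.

Definition word := seq letter.

(* An element of V = free algebra with basis the words, given by its
   coefficient function (the elements arising below have finite support). *)
Definition vec (F : fieldType) := word -> F.
Definition vzero (F : fieldType) : vec F := fun _ => 0.
Definition vadd (F : fieldType) (a b : vec F) : vec F := fun w => a w + b w.
Definition wvec (F : fieldType) (v : word) : vec F := fun w => (w == v)%:R.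

Definition pairing (a b : letter) : int := if a == b then 2%Z else (-2)%Z.

(* q-shuffle product u * v of two words, as an element of V:
   1*v = v, u*1 = u,
   u*v = u1 ((u2..ur)*v) + v1 (u*(v2..vs)) q^{<u1,v1>+...+<ur,v1>}. *)
Fixpoint qshuffle (F : fieldType) (q : F) (u : word) : word -> vec F :=
  match u with
  | [::] => fun v => wvec F v
  | u1 :: u' =>
      fix sh' (v : word) : vec F :=
        match v with
        | [::] => wvec F (u1 :: u')
        | v1 :: v' => fun w =>
            match w with
            | [::] => 0
            | a :: w' =>
                (a == u1)%:R * qshuffle q u' (v1 :: v') w'
                + (a == v1)%:R * sh' v' w'
                  * q ^ (\sum_(c <- u1 :: u') pairing c v1)
            end
        end
  end.

Definition qcomm (F : fieldType) (q : F) (u v : word) : vec F :=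
  fun w => qshuffle q u v w - qshuffle q v u w.

(* W_{-k} = xyx...x (length 2k+1) *)
Definition Wneg (k : nat) : word := lx :: flatten (nseq k [:: ly; lx]).
(* W_{k+1} = yxy...y (length 2k+1) *)
Definition Wpos (k : nat) : word := ly :: flatten (nseq k [:: lx; ly]).
Definition Gw (k : nat) : word := flatten (nseq k [:: ly; lx]).
Definition Gtw (k : nat) : word := flatten (nseq k [:: lx; ly]).

Definition not_root_of_unity (F : fieldType) (q : F) : Prop :=
  forall n : nat, (0 < n)%N -> q ^+ n != 1.

(* The coefficient of a word a·w in u ⋆ v is
   [u_1 = a] (u' ⋆ v)_w + [v_1 = a] q^<u,a> (u ⋆ v')_w.
   The tail of an alternating word is again alternating (or empty), and
   <u,a> is 0 for u = G_k, ~G_k and <u_1,a> for u = W_{-k}, W_{k+1}.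
   Hence the coefficient of x·w (or y·w) in each of the relations, enlarged by
   four auxiliary ones, is a linear combination of the coefficients of w, or of
   its image under x <-> y, in relations of the same family.  The swap x <-> y
   preserves the pairing, so it is an automorphism of the q-shuffle algebra;
   the family therefore holds at every word by induction on the length,
   starting from the empty word. *)

From HB Require Import structures.
From mathcomp Require Import all_boot all_order all_algebra.
From mathcomp Require Import ring.
Import GRing.Theory.
Set Implicit Arguments. Unset Strict Implicit. Unset Printing Implicit Defensive.
Local Open Scope ring_scope.

Arguments qshuffle : simpl never.

Definition wpairing (u : word) (b : letter) : int := \sum_(c <- u) pairing c b.

Lemma wpairing_cons b u a : wpairing (b :: u) a = pairing b a + wpairing u a.
Proof. exact: big_cons. Qed.

Definition swapl (a : letter) : letter := if a is lx then ly else lx.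
Definition swapw : word -> word := map swapl.

Lemma swaplK : involutive swapl. Proof. by case. Qed.
Lemma swapwK : involutive swapw. Proof. exact: mapK swaplK. Qed.

Lemma pairing_swapl a b : pairing (swapl a) (swapl b) = pairing a b.
Proof. by case: a; case: b. Qed.

Lemma wpairing_swapw u a : wpairing (swapw u) (swapl a) = wpairing u a.
Proof. by rewrite /wpairing big_map; under eq_bigr do rewrite pairing_swapl. Qed.

Section QShuffle.
Variables (F : fieldType) (q : F).

Lemma qshuffle_nil_l v w : qshuffle q [::] v w = wvec F v w. Proof. by []. Qed.
Lemma qshuffle_nil_r u w : qshuffle q u [::] w = wvec F u w. Proof. by case: u. Qed.

Lemma qshuffle_at_nil u v :
  qshuffle q u v [::] = ((u == [::]) && (v == [::]))%:R.
Proof. by case: u => [|b u]; case: v => [|c v] //=; rewrite qshuffle_nil_r. Qed.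

Lemma qshuffle_at_cons u v a w :
  qshuffle q u v (a :: w) =
    (ohead u == Some a)%:R * qshuffle q (behead u) v w
  + (ohead v == Some a)%:R * q ^ wpairing u a * qshuffle q u (behead v) w.
Proof.
case: u => [|b u]; case: v => [|c v]; rewrite /= ?(inj_eq (@Some_inj _)).
- by rewrite qshuffle_nil_l /wvec !mul0r addr0.
- rewrite qshuffle_nil_l /wvec /wpairing big_nil expr0z mul0r add0r mulr1.
  by rewrite eqseq_cons -natrM mulnb [c == a]eq_sym.
- rewrite !qshuffle_nil_r /wvec !mul0r addr0.
  by rewrite eqseq_cons -natrM mulnb [b == a]eq_sym.
- rewrite {1}/qshuffle -/qshuffle [b == a]eq_sym [c == a]eq_sym mulrAC.
  by case: (a =P c) => [->|_]; rewrite ?mul0r.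
Qed.

Lemma qshuffle_swapw u v w :
  qshuffle q (swapw u) (swapw v) (swapw w) = qshuffle q u v w.
Proof.
elim: w u v => [|a w IH] u v.
  by rewrite !qshuffle_at_nil; case: u; case: v.
rewrite /= !qshuffle_at_cons wpairing_swapw.
case: u => [|b u]; case: v => [|c v];
  by rewrite /= -!IH ?(inj_eq (@Some_inj _)) ?(inj_eq (can_inj swaplK)).
Qed.

Lemma qshuffle_at_swapw u v w :
  qshuffle q u v (swapw w) = qshuffle q (swapw u) (swapw v) w.
Proof. by rewrite -qshuffle_swapw swapwK. Qed.

Lemma qcomm_nil_l v w : qcomm q [::] v w = 0.
Proof. by rewrite /qcomm qshuffle_nil_r subrr. Qed.

Lemma qcomm_nil_r u w : qcomm q u [::] w = 0.
Proof. by rewrite /qcomm qshuffle_nil_r subrr. Qed.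

Lemma qcomm_at_swapw u v w :
  qcomm q u v (swapw w) = qcomm q (swapw u) (swapw v) w.
Proof. by rewrite /qcomm !qshuffle_at_swapw. Qed.

Lemma expr_pairing a b : q ^ pairing a b = if a == b then q ^+ 2 else q ^- 2.
Proof. by rewrite /pairing; case: (a == b). Qed.

End QShuffle.

Lemma behead_Wneg k : behead (Wneg k) = Gw k. Proof. by []. Qed.
Lemma behead_Wpos k : behead (Wpos k) = Gtw k. Proof. by []. Qed.
Lemma behead_Gw k : behead (Gw k.+1) = Wneg k. Proof. by []. Qed.
Lemma behead_Gtw k : behead (Gtw k.+1) = Wpos k. Proof. by []. Qed.

Lemma wpairing_Gw k a : wpairing (Gw k) a = 0.
Proof.
elim: k => [|k IH]; first exact: big_nil.
by rewrite -[Gw _]/([:: ly, lx & Gw k]) !wpairing_cons IH addr0 {IH}; case: a.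
Qed.

Lemma wpairing_Gtw k a : wpairing (Gtw k) a = 0.
Proof.
elim: k => [|k IH]; first exact: big_nil.
by rewrite -[Gtw _]/([:: lx, ly & Gtw k]) !wpairing_cons IH addr0 {IH}; case: a.
Qed.

Lemma wpairing_Wneg k a : wpairing (Wneg k) a = pairing lx a.
Proof. by rewrite wpairing_cons wpairing_Gw addr0. Qed.

Lemma wpairing_Wpos k a : wpairing (Wpos k) a = pairing ly a.
Proof. by rewrite wpairing_cons wpairing_Gtw addr0. Qed.

Definition alt_wordE :=
  (behead_Wneg, behead_Wpos, behead_Gw, behead_Gtw,
   wpairing_Wneg, wpairing_Wpos, wpairing_Gw, wpairing_Gtw).

Lemma swapw_Gw k : swapw (Gw k) = Gtw k.
Proof. by elim: k => //= k ->. Qed.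

Lemma swapw_Gtw k : swapw (Gtw k) = Gw k.
Proof. by rewrite -swapw_Gw swapwK. Qed.

Lemma swapw_Wneg k : swapw (Wneg k) = Wpos k.
Proof. exact: (congr1 (cons ly) (swapw_Gw k)). Qed.

Lemma swapw_Wpos k : swapw (Wpos k) = Wneg k.
Proof. by rewrite -swapw_Wneg swapwK. Qed.

Definition swapwE := (swapw_Gw, swapw_Gtw, swapw_Wneg, swapw_Wpos).

Section Relations.
Variables (F : fieldType) (q : F).
Hypothesis q_neq0 : q != 0.

Definition tcomm (c : F) (u v : word) : vec F :=
  fun w => qshuffle q u v w - c * qshuffle q v u w.

Definition comm_Wneg_Gw (k l : nat) : vec F :=
  fun w => qcomm q (Wneg k) (Gw l.+1) w + qcomm q (Gw k.+1) (Wneg l) w.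

Definition comm_Wneg_Wpos (k l : nat) : vec F :=
  fun w => qcomm q (Wneg k) (Wpos l) w + qcomm q (Wpos k) (Wneg l) w.

Definition comm_Wneg_Gtw (k l : nat) : vec F :=
  fun w => qcomm q (Wneg k) (Gtw l.+1) w + qcomm q (Gtw k.+1) (Wneg l) w.

Definition comm_Gtw_Gw (k l : nat) : vec F :=
  fun w => qcomm q (Gtw k) (Gw l) w + qcomm q (Gw k) (Gtw l) w.

(* Auxiliary relations, not part of the theorem, needed to close the induction. *)
Definition tcomm_Gw_Wneg (k l : nat) : vec F :=
  fun w => tcomm (q ^+ 2) (Gw k) (Wneg l) w - tcomm (q ^+ 2) (Gw l) (Wneg k) w.

Definition tcomm_Gw_Wpos (k l : nat) : vec F :=
  fun w => tcomm (q ^- 2) (Gw k) (Wpos l) w - tcomm (q ^- 2) (Gw l) (Wpos k) w.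

Definition comm_Gw_Gtw_shift (k l : nat) : vec F :=
  fun w => qcomm q (Gw k.+1) (Gtw l) w - qcomm q (Gw k) (Gtw l.+1) w
    - (q ^+ 2 - 1) * (qshuffle q (Wneg k) (Wpos l) w - qshuffle q (Wneg l) (Wpos k) w).

Definition tcomm_Gw_Gtw (k l : nat) : vec F :=
  fun w => (if k is k'.+1 then qcomm q (Wneg k') (Wpos l) w else 0)
    - (if l is l'.+1 then qcomm q (Wneg l') (Wpos k) w else 0)
    + tcomm (q ^- 2) (Gw k) (Gtw l) w - tcomm (q ^- 2) (Gw l) (Gtw k) w.

Ltac unfold_relations :=
  rewrite /comm_Wneg_Gw /comm_Wneg_Wpos /comm_Wneg_Gtw /comm_Gtw_Gw /tcomm_Gw_Wneg
    /tcomm_Gw_Wpos /comm_Gw_Gtw_shift /tcomm_Gw_Gtw /tcomm /qcomm.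

Ltac expand_first_letter :=
  unfold_relations;
  rewrite ?qshuffle_at_swapw ?swapwE !qshuffle_at_cons ?alt_wordE ?expr_pairing /=
    ?qshuffle_nil_l ?qshuffle_nil_r;
  by field; rewrite ?expf_neq0.

Lemma qcomm_Wneg_at_lx k l w :
  qcomm q (Wneg k) (Wneg l) (lx :: w) = tcomm_Gw_Wneg k l w.
Proof. expand_first_letter. Qed.

Lemma qcomm_Wneg_at_ly k l w : qcomm q (Wneg k) (Wneg l) (ly :: w) = 0.
Proof. expand_first_letter. Qed.

Lemma qcomm_Gw_at_lx k l w : qcomm q (Gw k.+1) (Gw l.+1) (lx :: w) = 0.
Proof. expand_first_letter. Qed.

Lemma qcomm_Gw_at_ly k l w :
  qcomm q (Gw k.+1) (Gw l.+1) (ly :: w) = comm_Wneg_Gw k l w.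
Proof. expand_first_letter. Qed.

Lemma comm_Wneg_Gw_at_lx k l w :
  comm_Wneg_Gw k l (lx :: w) =
    qcomm q (Gw k) (Gw l.+1) w + qcomm q (Gw k.+1) (Gw l) w.
Proof. expand_first_letter. Qed.

Lemma comm_Wneg_Gw_at_ly k l w :
  comm_Wneg_Gw k l (ly :: w) = (1 + q ^- 2) * qcomm q (Wneg k) (Wneg l) w.
Proof. expand_first_letter. Qed.

Lemma tcomm_Gw_Wneg_at_lx k l w :
  tcomm_Gw_Wneg k l (lx :: w) = (1 + q ^+ 2) * qcomm q (Gw k) (Gw l) w.
Proof. by case: k => [|k]; case: l => [|l]; expand_first_letter. Qed.

Lemma tcomm_Gw_Wneg_at_ly k l w :
  tcomm_Gw_Wneg k l (ly :: w) =
    (if k is k'.+1 then qcomm q (Wneg k') (Wneg l) w else 0)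
  - (if l is l'.+1 then qcomm q (Wneg l') (Wneg k) w else 0).
Proof. by case: k => [|k]; case: l => [|l]; expand_first_letter. Qed.

Lemma comm_Wneg_Wpos_at_lx k l w :
  comm_Wneg_Wpos k l (lx :: w) = tcomm_Gw_Wpos k l w.
Proof. expand_first_letter. Qed.

Lemma comm_Wneg_Wpos_at_ly k l w :
  comm_Wneg_Wpos k l (ly :: w) = tcomm_Gw_Wpos k l (swapw w).
Proof. expand_first_letter. Qed.

Lemma comm_Wneg_Gtw_at_lx k l w :
  comm_Wneg_Gtw k l (lx :: w) =
    comm_Wneg_Wpos k l w - comm_Gw_Gtw_shift k l w + comm_Gtw_Gw k.+1 l w.
Proof. expand_first_letter. Qed.

Lemma comm_Wneg_Gtw_at_ly k l w : comm_Wneg_Gtw k l (ly :: w) = 0.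
Proof. expand_first_letter. Qed.

Lemma comm_Gtw_Gw_at_lx k l w :
  comm_Gtw_Gw k.+1 l.+1 (lx :: w) = comm_Wneg_Gtw k l (swapw w).
Proof. expand_first_letter. Qed.

Lemma comm_Gtw_Gw_at_ly k l w :
  comm_Gtw_Gw k.+1 l.+1 (ly :: w) = comm_Wneg_Gtw k l w.
Proof. expand_first_letter. Qed.

Lemma tcomm_Gw_Wpos_at_lx k l w : tcomm_Gw_Wpos k l (lx :: w) = 0.
Proof. by case: k => [|k]; case: l => [|l]; expand_first_letter. Qed.

Lemma tcomm_Gw_Wpos_at_ly k l w :
  tcomm_Gw_Wpos k l (ly :: w) = tcomm_Gw_Gtw k l w.
Proof. by case: k => [|k]; case: l => [|l]; expand_first_letter. Qed.

Lemma comm_Gw_Gtw_shift_at_lx k l w :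
  comm_Gw_Gtw_shift k l (lx :: w) =
    (if l is l'.+1 then comm_Wneg_Gtw k l' (swapw w) else 0)
  - q ^+ 2 * tcomm_Gw_Wpos k l w.
Proof. by case: k => [|k]; case: l => [|l]; expand_first_letter. Qed.

Lemma comm_Gw_Gtw_shift_at_ly k l w :
  comm_Gw_Gtw_shift k l (ly :: w) =
    tcomm_Gw_Wpos k l (swapw w)
  - (if k is k'.+1 then comm_Wneg_Gtw k' l w else 0).
Proof. by case: k => [|k]; case: l => [|l]; expand_first_letter. Qed.

Lemma tcomm_Gw_Gtw_at_lx k l w :
  tcomm_Gw_Gtw k l (lx :: w) =
    (if k is k'.+1 then tcomm_Gw_Wpos k' l w else 0)
  + (if l is l'.+1 then tcomm_Gw_Wpos k l' w else 0).
Proof. by case: k => [|k]; case: l => [|l]; expand_first_letter. Qed.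

Lemma tcomm_Gw_Gtw_at_ly k l w :
  tcomm_Gw_Gtw k l (ly :: w) =
    (1 + q ^- 2) *
    (if k is k'.+1 then if l is l'.+1 then comm_Wneg_Gtw k' l' w else 0 else 0).
Proof. by case: k => [|k]; case: l => [|l]; expand_first_letter. Qed.

Record alt_relations (w : word) : Prop := AltRelations {
  qcomm_Wneg_eq0 : forall k l, qcomm q (Wneg k) (Wneg l) w = 0;
  qcomm_Gw_eq0 : forall k l, qcomm q (Gw k) (Gw l) w = 0;
  comm_Wneg_Gw_eq0 : forall k l, comm_Wneg_Gw k l w = 0;
  tcomm_Gw_Wneg_eq0 : forall k l, tcomm_Gw_Wneg k l w = 0;
  comm_Wneg_Wpos_eq0 : forall k l, comm_Wneg_Wpos k l w = 0;
  comm_Wneg_Gtw_eq0 : forall k l, comm_Wneg_Gtw k l w = 0;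
  comm_Gtw_Gw_eq0 : forall k l, comm_Gtw_Gw k l w = 0;
  tcomm_Gw_Wpos_eq0 : forall k l, tcomm_Gw_Wpos k l w = 0;
  comm_Gw_Gtw_shift_eq0 : forall k l, comm_Gw_Gtw_shift k l w = 0;
  tcomm_Gw_Gtw_eq0 : forall k l, tcomm_Gw_Gtw k l w = 0
}.

Lemma alt_relations_nil : alt_relations [::].
Proof.
split=> k l; case: k => [|k]; case: l => [|l];
  by unfold_relations; rewrite !qshuffle_at_nil /=; ring.
Qed.

Lemma alt_relations_cons a w :
  alt_relations w -> alt_relations (swapw w) -> alt_relations (a :: w).
Proof.
move=> Hw Hsw; split=> k l.
- by case: a; rewrite ?qcomm_Wneg_at_lx ?qcomm_Wneg_at_ly ?(tcomm_Gw_Wneg_eq0 Hw).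
- case: k l => [|k] [|l]; rewrite ?qcomm_nil_l ?qcomm_nil_r //.
  by case: a; rewrite ?qcomm_Gw_at_lx ?qcomm_Gw_at_ly ?(comm_Wneg_Gw_eq0 Hw).
- case: a; rewrite ?comm_Wneg_Gw_at_lx ?comm_Wneg_Gw_at_ly.
  + by rewrite !(qcomm_Gw_eq0 Hw) addr0.
  + by rewrite (qcomm_Wneg_eq0 Hw) mulr0.
- case: a; rewrite ?tcomm_Gw_Wneg_at_lx ?tcomm_Gw_Wneg_at_ly.
  + by rewrite (qcomm_Gw_eq0 Hw) mulr0.
  + by case: k l => [|k] [|l]; rewrite ?(qcomm_Wneg_eq0 Hw) subrr.
- case: a; rewrite ?comm_Wneg_Wpos_at_lx ?comm_Wneg_Wpos_at_ly.
  + exact: (tcomm_Gw_Wpos_eq0 Hw).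
  + exact: (tcomm_Gw_Wpos_eq0 Hsw).
- case: a; rewrite ?comm_Wneg_Gtw_at_lx ?comm_Wneg_Gtw_at_ly //.
  by rewrite (comm_Wneg_Wpos_eq0 Hw) (comm_Gw_Gtw_shift_eq0 Hw) (comm_Gtw_Gw_eq0 Hw)
    subrr add0r.
- case: k l => [|k] [|l].
  + by rewrite /comm_Gtw_Gw !qcomm_nil_l addr0.
  + by rewrite /comm_Gtw_Gw !qcomm_nil_l ?qcomm_nil_r addr0.
  + by rewrite /comm_Gtw_Gw !qcomm_nil_r addr0.
  + case: a; rewrite ?comm_Gtw_Gw_at_lx ?comm_Gtw_Gw_at_ly.
    * exact: (comm_Wneg_Gtw_eq0 Hsw).
    * exact: (comm_Wneg_Gtw_eq0 Hw).
- case: a; rewrite ?tcomm_Gw_Wpos_at_lx ?tcomm_Gw_Wpos_at_ly //.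
  exact: (tcomm_Gw_Gtw_eq0 Hw).
- case: a; rewrite ?comm_Gw_Gtw_shift_at_lx ?comm_Gw_Gtw_shift_at_ly.
  + by case: l => [|l]; rewrite ?(comm_Wneg_Gtw_eq0 Hsw) (tcomm_Gw_Wpos_eq0 Hw)
      mulr0 subrr.
  + by case: k => [|k]; rewrite ?(comm_Wneg_Gtw_eq0 Hw) (tcomm_Gw_Wpos_eq0 Hsw)
      subrr.
- case: a; rewrite ?tcomm_Gw_Gtw_at_lx ?tcomm_Gw_Gtw_at_ly.
  + by case: k l => [|k] [|l]; rewrite ?(tcomm_Gw_Wpos_eq0 Hw) addr0.
  + by case: k l => [|k] [|l]; rewrite ?(comm_Wneg_Gtw_eq0 Hw) mulr0.
Qed.

Lemma alt_relations_all w : alt_relations w.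
Proof.
suff: alt_relations w /\ alt_relations (swapw w) by case.
elim: w => [|a w [Hw Hsw]]; first by split; exact: alt_relations_nil.
by split; apply: alt_relations_cons; rewrite ?swapwK.
Qed.

End Relations.

Theorem proposition5p10 (F : fieldType) (q : F)
  (hq0 : q != 0) (hq : not_root_of_unity q) (k l : nat) :
  qcomm q (Wneg k) (Wneg l) =1 vzero F /\
      qcomm q (Wpos k) (Wpos l) =1 vzero F /\
      vadd (qcomm q (Wneg k) (Wpos l)) (qcomm q (Wpos k) (Wneg l)) =1 vzero F /\
      vadd (qcomm q (Wneg k) (Gw l.+1)) (qcomm q (Gw k.+1) (Wneg l)) =1 vzero F /\
      vadd (qcomm q (Wneg k) (Gtw l.+1)) (qcomm q (Gtw k.+1) (Wneg l)) =1 vzero F /\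
      vadd (qcomm q (Wpos k) (Gw l.+1)) (qcomm q (Gw k.+1) (Wpos l)) =1 vzero F /\
      vadd (qcomm q (Wpos k) (Gtw l.+1)) (qcomm q (Gtw k.+1) (Wpos l)) =1 vzero F /\
      qcomm q (Gw k.+1) (Gw l.+1) =1 vzero F /\
      qcomm q (Gtw k.+1) (Gtw l.+1) =1 vzero F /\
      vadd (qcomm q (Gtw k.+1) (Gw l.+1)) (qcomm q (Gw k.+1) (Gtw l.+1)) =1 vzero F.
Proof.
have R := alt_relations_all hq0.
rewrite /vadd /vzero; repeat split; move=> w.
- exact: qcomm_Wneg_eq0.
- by move: (qcomm_Wneg_eq0 (R (swapw w)) k l); rewrite qcomm_at_swapw !swapwE.
- exact: comm_Wneg_Wpos_eq0.
- exact: comm_Wneg_Gw_eq0.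
- exact: comm_Wneg_Gtw_eq0.
- move: (comm_Wneg_Gtw_eq0 (R (swapw w)) k l).
  by rewrite /comm_Wneg_Gtw !qcomm_at_swapw !swapwE.
- move: (comm_Wneg_Gw_eq0 (R (swapw w)) k l).
  by rewrite /comm_Wneg_Gw !qcomm_at_swapw !swapwE.
- exact: qcomm_Gw_eq0.
- by move: (qcomm_Gw_eq0 (R (swapw w)) k.+1 l.+1); rewrite qcomm_at_swapw !swapwE.
- exact: (comm_Gtw_Gw_eq0 (R w) k.+1 l.+1).
Qed.
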